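(* Let $l:\mathbb{Z}^2\to\mathcal{L}^4_0$ be a principal contact element net with one family of spherical parameter lines $\{l_{i,j}\}_{i\in\mathbb{Z}}$. Generically, $\mathcal{L}_A^3l$ is Goursat degenerate and $\mathcal{L}_B^2l$ is Laplace degenerate.
   Context: Let $e_1,\dots,e_6$ be an orthonormal basis of $\mathbb{R}^{4,2}$ with $\langle e_i,e_i\rangle=1$ for $i\le4$ and $\langle e_5,e_5\rangle=\langle e_6,e_6\rangle=-1$. The Lie quadric is $\mathcal{L}^4=\{[x]\in\mathbb{R}\mathrm{P}^5:\langle x,x\rangle=0\}$ and $\mathcal{L}^4_0$ the set of lines contained in $\mathcal{L}^4$. A discrete line congruence is a map $l$ from $\mathbb{Z}^2$ to lines in a projective space such that neighbouring lines intersect; a principal contact element net is a discrete line congruence with values in $\mathcal{L}^4_0$. $\vee$ denotes projective span. The net has one family of spherical parameter lines $\{l_{i,j}\}_{i}$ if for every $j$ the span $\bigvee_i l_{i,j}$ is $4$-dimensional and the planes $\{l_{i,j}\vee l_{i,j+1}\}_{i\in\mathbb{Z}}$ are concurrent. Laplace transforms of line congruences: $\mathcal{L}_Al(i,j)=(l_{i,j}\vee l_{i+1,j})\cap(l_{i,j+1}\vee l_{i+1,j+1})$, $\mathcal{L}_Bl(i,j)=(l_{i,j}\vee l_{i,j+1})\cap(l_{i+1,j}\vee l_{i+1,j+1})$ (again line congruences), with iterates. $\mathcal{L}_A^kl$ is Goursat degenerate if $\mathcal{L}_A^kl(i,j)$ is independent of $i$; $\mathcal{L}_B^kl$ is Laplace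 degenerate if $\mathcal{L}_B^kl(i,j)$ is independent of $i$. ''Generically'' means for data in general position subject to the stated constraints. *)

(* Projective space RP^5 = subspaces of R^6 ('rV[R]_6);
   a projective subspace of dimension d is a vector subspace of dimension d+1. *)
From HB Require Import structures.
From mathcomp Require Import all_boot all_order all_algebra.
Set Implicit Arguments.
Unset Strict Implicit.
Unset Printing Implicit Defensive.
Import Order.TTheory GRing.Theory Num.Theory.
Local Open Scope ring_scope.

Section LieGeometry.
Variable R : realFieldType.
Local Notation V := 'rV[R]_6.

Definition lie_form (x y : V) : R :=
  \sum_(k < 6) (if (k < 4)%N then 1 else -1) * x 0 k * y 0 k.

Definition is_line (U : {vspace V}) : Prop := \dim U = 2%N.
Definition is_point (U : {vspace V}) : Prop := \dim U = 1%N.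

Definition in_lie_quadric (U : {vspace V}) : Prop :=
  forall x, x \in U -> lie_form x x = 0.

Definition net := int -> int -> {vspace V}.

Definition intersect (U W : {vspace V}) : Prop := (0 < \dim (U :&: W))%N.

Definition line_congruence (l : net) : Prop :=
  (forall i j, is_line (l i j)) /\
  (forall i j, intersect (l i j) (l (i + 1)%R j) /\ intersect (l i j) (l i (j + 1)%R)).

Definition principal_contact_element_net (l : net) : Prop :=
  line_congruence l /\ forall i j, in_lie_quadric (l i j).

Definition is_span_of (H : {vspace V}) (f : int -> {vspace V}) : Prop :=
  (forall i, (f i <= H)%VS) /\
  (forall W : {vspace V}, (forall i, (f i <= W)%VS) -> (H <= W)%VS).

Definition concurrency_point (l : net) (j : int) (p : {vspace V}) : Prop :=
  is_point p /\ forall i, (p <= l i j + l i (j + 1)%R)%VS.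

Definition spherical_i_lines (l : net) : Prop :=
  forall j,
    (exists H, is_span_of H (fun i => l i j) /\ \dim H = 5%N) /\
    (exists p, concurrency_point l j p).

Definition LA (m : net) : net := fun i j =>
  ((m i j + m (i + 1)%R j) :&: (m i (j + 1)%R + m (i + 1)%R (j + 1)%R))%VS.
Definition LB (m : net) : net := fun i j =>
  ((m i j + m i (j + 1)%R) :&: (m (i + 1)%R j + m (i + 1)%R (j + 1)%R))%VS.

Definition goursat_degenerate (m : net) : Prop :=
  forall i i' j, m i j = m i' j.
Definition laplace_degenerate (m : net) : Prop :=
  forall i i' j, m i j = m i' j.

(* "Generically": open general-position conditions:
   (1) the iterated Laplace transforms involved are lines;
   (2) any four consecutive sphere-hyperplanes H_j..H_{j+3} meet in a
       projective line (general position of the hyperplanes);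
   (3) concurrency points of consecutive rows are distinct. *)
Definition generic_net (l : net) : Prop :=
  (forall k, (1 <= k <= 3)%N -> forall i j, is_line (iter k LA l i j)) /\
  (forall k, (1 <= k <= 2)%N -> forall i j, is_line (iter k LB l i j)) /\
  (forall j (H0 H1 H2 H3 : {vspace V}),
      is_span_of H0 (fun i => l i j) ->
      is_span_of H1 (fun i => l i (j + 1)%R) ->
      is_span_of H2 (fun i => l i (j + 2)%R) ->
      is_span_of H3 (fun i => l i (j + 3)%R) ->
      \dim (H0 :&: H1 :&: H2 :&: H3) = 2%N) /\
  (forall j p q, concurrency_point l j p -> concurrency_point l (j + 1)%R q ->
      p != q).

End LieGeometry.

(* The hyperplanes H_j, ..., H_{j+3} spanned by four consecutive rows of
   spherical parameter lines generically meet in a line.  Each L_A step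
   intersects a plane of row j with a plane of row j+1, so row j of L_A^3 l
   lies in all four hyperplanes; being itself a line, it is their common line,
   independent of i.  Dually, the concurrency point p_j of the planes
   l_{i,j} \/ l_{i,j+1} lies on every line of row j of L_B l, so the line
   p_j \/ p_{j+1} lies on, hence is, every line of row j of L_B^2 l. *)
From HB Require Import structures.
From mathcomp Require Import all_boot all_order all_algebra.

Set Implicit Arguments.
Unset Strict Implicit.
Unset Printing Implicit Defensive.
Import Order.TTheory GRing.Theory Num.Theory.
Local Open Scope ring_scope.

Section Subspaces.
Variables (K : fieldType) (vT : vectType K).
Implicit Types U W p q : {vspace vT}.

Lemma subv_dimv_eq U W : (U <= W)%VS -> (\dim W <= \dim U)%N -> U = W.
Proof. by move=> sUW leWU; apply/eqP; rewrite eqEdim sUW leWU. Qed.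

Lemma dimv_add_points p q :
  \dim p = 1%N -> \dim q = 1%N -> p != q -> \dim (p + q) = 2%N.
Proof.
move=> dp dq neq_pq.
suff cap0 : \dim (p :&: q) = 0%N.
  by have := dimv_sum_cap p q; rewrite cap0 dp dq addn0.
case: (posnP (\dim (p :&: q))) => // cap_gt0.
have cap_eq W : \dim W = 1%N -> (p :&: q <= W)%VS -> (p :&: q)%VS = W.
  by move=> dW sW; apply: subv_dimv_eq; rewrite ?dW.
by rewrite -(cap_eq p) ?capvSl // (cap_eq q) ?capvSr ?eqxx in neq_pq.
Qed.

End Subspaces.

Section LaplaceTransforms.
Variable R : realFieldType.
Implicit Types (m : net R) (W : {vspace 'rV[R]_6}).

Lemma iter_LA_subv m k t j W :
  (t <= k)%N -> (forall i, (m i (j + t%:Z)%R <= W)%VS) ->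
  forall i, (iter k (@LA R) m i j <= W)%VS.
Proof.
elim: k t j => [|k IHk] t j.
  by rewrite leqn0 => /eqP-> rowW i; have := rowW i; rewrite addr0.
rewrite leq_eqVlt ltnS => /orP[/eqP-> | le_tk] rowW i /=.
- have rowW' i' : (m i' (j + 1 + k%:Z)%R <= W)%VS.
    by rewrite -addrA (addrC 1) -PoszD addn1.
  apply: subv_trans (capvSr _ _) _.
  by rewrite subv_add !(IHk k (j + 1)%R (leqnn k) rowW').
- apply: subv_trans (capvSl _ _) _.
  by rewrite subv_add !(IHk t j le_tk rowW).
Qed.

Lemma subv_LB m j W :
  (forall i, (W <= m i j + m i (j + 1)%R)%VS) -> forall i, (W <= LB m i j)%VS.
Proof. by move=> sW i; rewrite subv_cap !sW. Qed.

End LaplaceTransforms.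

Theorem proposition5p6 (R : realFieldType) (l : net R) :
  principal_contact_element_net l ->
  spherical_i_lines l ->
  generic_net l ->
  goursat_degenerate (iter 3 (@LA R) l) /\ laplace_degenerate (iter 2 (@LB R) l).
Proof.
move=> _ spherical [lineA [lineB [sphere_cap points_neq]]]; split=> i i' j.
- have [[H0 [spanH0 _]] _] := spherical j.
  have [[H1 [spanH1 _]] _] := spherical (j + 1)%R.
  have [[H2 [spanH2 _]] _] := spherical (j + 2)%R.
  have [[H3 [spanH3 _]] _] := spherical (j + 3)%R.
  have rowA k : iter 3 (@LA R) l k j = (H0 :&: H1 :&: H2 :&: H3)%VS.
    apply: subv_dimv_eq; last by rewrite (sphere_cap j) ?(lineA 3%N isT k j).
    rewrite !subv_cap -!andbA; apply/and4P; split.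
    + by apply: (iter_LA_subv (t := 0)) => // k'; rewrite addr0; apply: spanH0.1.
    + exact: (iter_LA_subv (t := 1)) spanH1.1 _.
    + exact: (iter_LA_subv (t := 2)) spanH2.1 _.
    + exact: (iter_LA_subv (t := 3)) spanH3.1 _.
  by rewrite !rowA.
- have [_ [p [pt_p on_p]]] := spherical j.
  have [_ [q [pt_q on_q]]] := spherical (j + 1)%R.
  have rowB k : iter 2 (@LB R) l k j = (p + q)%VS.
    apply/esym/subv_dimv_eq.
      apply: subv_LB => k' /=.
      by apply: addvS; [exact: (subv_LB on_p) | exact: (subv_LB on_q)].
    have neq_pq := points_neq j p q (conj pt_p on_p) (conj pt_q on_q).
    by rewrite (lineB 2%N isT k j) dimv_add_points.
  by rewrite !rowB.
Qed.
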